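(* Let $G$ be a connected threshold graph of order $n\ge 4$ and size $m$ with $n-1<m<\binom{n}{2}$, with $c$ type 1 vertices, backwards zero position sequence $(b_1,\ldots,b_z)$, $F_1=\sum_{i=1}^z b_i^2$, and lazy walk counts $\mathrm{LW}_k$ as in the context. Define $(\mathrm{LW}''_k)_{k\in\mathbb{N}_0}$ by $\mathrm{LW}''_0=1$ and \[\mathrm{LW}''_k=c\,\mathrm{LW}''_{k-1}+\sum_{r=0}^{k-3}\mathrm{LW}''_r\sum_{q\in\mathbb{N}_0}\binom{k-3-r-q}{q}F_1\Big(\sum_{i=1}^z b_i\Big)^q\qquad(k\in\mathbb{N}).\] Then $\mathrm{LW}''_k\ge \mathrm{LW}_k$ for every $k\in\mathbb{N}_0$.
   Context: A threshold graph is a simple graph whose vertices can be ordered $v_1,\ldots,v_n$ so that for each $2\le i\le n$, $v_i$ is either adjacent to all of $v_1,\ldots,v_{i-1}$ (then $a_i=1$) or to none of them (then $a_i=0$); by convention $a_1=1$. Vertex $v_i$ is of type 1 if $a_i=1$ and of type 0 if $a_i=0$; $c$ and $z$ are the numbers of type 1 and type 0 vertices. The backwards zero position sequence $(b_1,\ldots,b_z)$ is defined by letting $b_i$ be the number of type 1 vertices appearing after the $i$-th type 0 vertex in the order $v_1,\ldots,v_n$. A lazy walk of length $k\in\mathbb{N}_0$ is a sequence $u_0u_1\cdots u_k$ of vertices such that for each $1\le i\le k$, $u_i=u_{i-1}$ or $u_i$ is adjacent to $u_{i-1}$. For $k\in\mathbb{N}$, $\mathrm{LW}_k$ is the number of lazy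 walks of length $k-1$ in $G$ whose first and last vertices are both type 1 vertices, and $\mathrm{LW}_0=1$. Binomial coefficients $\binom{a}{q}$ with integer $a$ and $q\in\mathbb{N}_0$ are taken to be $0$ whenever $a<q$. *)

From mathcomp Require Import all_boot.
Set Implicit Arguments. Unset Strict Implicit. Unset Printing Implicit Defensive.

(* A threshold graph on vertices 'I_n = v_1..v_n (0-indexed here), given by
   its creation sequence a : v_i is adjacent to all earlier vertices iff a i. *)
Definition tadj (n : nat) (a : 'I_n -> bool) : rel 'I_n :=
  fun i j => ((i < j) && a j) || ((j < i) && a i).

Definition tconnected (n : nat) (a : 'I_n -> bool) : Prop :=
  forall x y : 'I_n, connect (tadj a) x y.

Definition gsize (n : nat) (a : 'I_n -> bool) : nat :=
  #|[set p : 'I_n * 'I_n | (p.1 < p.2) && tadj a p.1 p.2]|.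

(* c = number of type 1 vertices *)
Definition ccount (n : nat) (a : 'I_n -> bool) : nat := #|[set i : 'I_n | a i]|.

(* for a type 0 vertex i, number of type 1 vertices after it (its b-value) *)
Definition bval (n : nat) (a : 'I_n -> bool) (i : 'I_n) : nat :=
  #|[set j : 'I_n | (i < j) && a j]|.

Definition F1 (n : nat) (a : 'I_n -> bool) : nat := \sum_(i < n | ~~ a i) bval a i ^ 2.
Definition sumb (n : nat) (a : 'I_n -> bool) : nat := \sum_(i < n | ~~ a i) bval a i.

Definition lazyrel (n : nat) (a : 'I_n -> bool) : rel 'I_n :=
  fun u v => (u == v) || tadj a u v.

(* LW_0 = 1; LW_{k+1} = number of lazy walks u_0 ... u_k (a k+1 tuple of
   vertices) whose first and last vertices are of type 1. *)
Definition LW (n : nat) (a : 'I_n -> bool) (k : nat) : nat :=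
  match k with
  | 0 => 1
  | k'.+1 => #|[set t : k'.+1.-tuple 'I_n |
                 [&& path (lazyrel a) (thead t) (behead t),
                     a (thead t) & a (last (thead t) (behead t))]]|
  end.

From mathcomp Require Import all_boot zify.
Set Implicit Arguments. Unset Strict Implicit. Unset Printing Implicit Defensive.

(* Let w_m(u) be the number of lazy walks of length m from u to a type 1
   vertex, so that LW_(m+1) is the sum of w_m over type 1 vertices.  A type 1
   vertex sees every type 1 vertex and the type 0 vertices before it, while a
   type 0 vertex z sees only itself and the b_z type 1 vertices after it.
   Hence LW_(m+2) = c LW_(m+1) + sum_z b_z w_m(z), and by induction on m
   w_m(z) <= b_z Y_m for type 0 vertices z and LW_(m+1) <= LW''_(m+1), where
   Y_m = sum_(r<m) LW''_r T_(m-1-r) is a convolution with the polynomials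
   T_t = sum_q C(t-q,q) S^q, S = sum_i b_i.  These satisfy
   T_(t+2) = T_(t+1) + S T_t, whence Y_(m+2) = Y_(m+1) + LW''_(m+1) + S Y_m,
   and the defining recursion reads LW''_(m+2) = c LW''_(m+1) + F_1 Y_m. *)

Lemma big_tupleS (T : finType) m (F : m.+1.-tuple T -> nat) :
  \sum_(t : m.+1.-tuple T) F t = \sum_(x : T) \sum_(t : m.-tuple T) F [tuple of x :: t].
Proof.
rewrite pair_big /= (reindex (fun p : T * m.-tuple T => [tuple of p.1 :: p.2])) //=.
exists (fun t : m.+1.-tuple T => (thead t, [tuple of behead t])) => [[x t] _|t _] /=.
  by congr pair; apply: val_inj.
by apply: val_inj => /=; rewrite [in RHS](tuple_eta t).
Qed.

Section WalkCount.

Variables (T : finType) (e : rel T) (P : pred T).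

Fixpoint nwalks (m : nat) (x : T) : nat :=
  if m is m'.+1 then \sum_(y | e x y) nwalks m' y else P x.

Lemma nwalksE m x :
  \sum_(t : m.-tuple T) (path e x t && P (last x t)) = nwalks m x.
Proof.
elim: m x => [|m IH] x /=.
  by rewrite (big_pred1 [tuple]) // => t; apply/esym/eqP/tuple0.
rewrite big_tupleS [RHS]big_mkcond; apply: eq_bigr => y _.
rewrite -IH; case: ifP => exy; last by rewrite big1 // => t _; rewrite /= exy.
by apply: eq_bigr => t _; rewrite /= exy.
Qed.

End WalkCount.

Section ThresholdWalks.

Variables (n : nat) (a : 'I_n -> bool).

Local Notation lw := (nwalks (lazyrel a) a).

Lemma LW_nwalks m : LW a m.+1 = \sum_(u | a u) lw m u.
Proof.
rewrite /LW -sum1dep_card big_mkcond big_tupleS [RHS]big_mkcond.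
apply: eq_bigr => u _; rewrite -nwalksE; case: ifP => au.
  by apply: eq_bigr => t _; rewrite theadE; case: (_ && _).
by apply: big1 => t _; rewrite andFb andbF.
Qed.

Lemma lazyrel_type0 z v : ~~ a z -> lazyrel a z v = (v == z) || (z < v) && a v.
Proof. by move=> /negbTE az; rewrite /lazyrel /tadj az andbF orbF eq_sym. Qed.

Lemma lazyrel_type1 u v : a u -> lazyrel a u v = a v || (v < u).
Proof.
move=> au; rewrite /lazyrel /tadj au andbT.
case: (u =P v) => [<-|ne] /=; first by rewrite au.
by case: (ltngtP u v) => [||/val_inj/ne] //= _; rewrite orbT.
Qed.

Lemma lw_type0 m z :
  ~~ a z -> lw m.+1 z = lw m z + \sum_(v : 'I_n | (z < v) && a v) lw m v.
Proof.
move=> az /=; rewrite (bigD1 z) /=; last by rewrite /lazyrel eqxx.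
congr (_ + _); apply: eq_bigl => v; rewrite lazyrel_type0 //.
by case: (v =P z) => [->|_] /=; rewrite ?ltnn ?andbT.
Qed.

Lemma lw_type1 m u :
  a u -> lw m.+1 u = LW a m.+1 + \sum_(w : 'I_n | ~~ a w && (w < u)) lw m w.
Proof.
move=> au; rewrite LW_nwalks /= (bigID a) /=.
by congr (_ + _); apply: eq_bigl => v; rewrite lazyrel_type1 //;
  case: (a v); rewrite /= ?andbF ?andbT.
Qed.

Lemma exchange_type0_before (g : 'I_n -> nat) :
  \sum_(u | a u) \sum_(w : 'I_n | ~~ a w && (w < u)) g w =
  \sum_(w | ~~ a w) bval a w * g w.
Proof.
rewrite (exchange_big_dep (fun w => ~~ a w)) /= => [|u w _ /andP[] //].
apply: eq_bigr => w aw; rewrite sum_nat_cond_const /bval; congr (_ * _).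
by apply: eq_card => u; rewrite !inE aw andbC.
Qed.

Lemma LW_rec m :
  LW a m.+2 = ccount a * LW a m.+1 + \sum_(w | ~~ a w) bval a w * lw m w.
Proof.
rewrite [LHS]LW_nwalks (eq_bigr _ (fun u => @lw_type1 m u)) big_split /=.
by rewrite sum_nat_cond_const exchange_type0_before.
Qed.

Lemma lw_type1_le p Y u :
  (forall w, ~~ a w -> lw p w <= bval a w * Y) ->
  a u -> lw p.+1 u <= LW a p.+1 + sumb a * Y.
Proof.
move=> lwY au; rewrite lw_type1 // leq_add2l /sumb big_distrl /=.
apply: (@leq_trans (\sum_(w : 'I_n | ~~ a w && (w < u)) bval a w * Y)).
  by apply: leq_sum => w /andP[aw _]; apply: lwY.
by rewrite [leqRHS](bigID (fun w : 'I_n => w < u)) /= leq_addr.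
Qed.

End ThresholdWalks.

Section FibonacciPolynomial.

Variable S : nat.

Fixpoint fibq (t : nat) : nat :=
  match t with
  | 0 | 1 => 1
  | (t'.+1 as t1).+1 => fibq t1 + S * fibq t'
  end.

Lemma bin_sub_gt t q : t < q -> 'C(t - q, q) = 0.
Proof. by move=> ltq; rewrite (eqP (ltnW ltq)) bin0n; case: q ltq. Qed.

Lemma bin_subSS t q : 'C(t.+1 - q, q.+1) = 'C(t - q, q.+1) + 'C(t - q, q).
Proof.
case: (leqP q t) => [le_qt|lt_tq]; first by rewrite subSn // binS.
have [-> ->] : t.+1 - q = 0 /\ t - q = 0 by lia.
by rewrite !bin0n; case: q lt_tq.
Qed.

Lemma fibqSS t : fibq t.+2 = fibq t.+1 + S * fibq t.
Proof. by []. Qed.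

Lemma fibq_sum t N : t < N -> \sum_(0 <= q < N) 'C(t - q, q) * S ^ q = fibq t.
Proof.
move: N; elim/ltn_ind: t => -[|[|t]] IH [|N] // ltN.
- by rewrite big_nat_recl // big1_seq // => q _; rewrite bin_sub_gt.
- case: N ltN => // N _.
  by rewrite big_nat_recl // big_nat_recl // big1_seq // => q _; rewrite bin_sub_gt.
have [ltN1 ltN2] : t.+1 < N.+1 /\ t < N by lia.
rewrite fibqSS -(IH t.+1 _ _ ltN1) // -(IH t _ _ ltN2) // !big_nat_recl //.
rewrite -addnA big_distrr -big_split /=; congr (_ + _); apply: eq_bigr => q _.
by rewrite !subSS bin_subSS expnS mulnDl; congr (_ + _); rewrite mulnCA.
Qed.

Variable L : nat -> nat.

Definition fibq_conv (m : nat) : nat := \sum_(0 <= r < m) L r * fibq (m.-1 - r).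

Lemma fibq_convSS p : fibq_conv p.+2 = fibq_conv p.+1 + L p.+1 + S * fibq_conv p.
Proof.
rewrite /fibq_conv /= !big_nat_recr //= subnn subSn // subnn !muln1.
have -> : \sum_(0 <= r < p) L r * fibq (p.+1 - r) =
  \sum_(0 <= r < p) L r * fibq (p - r) + S * \sum_(0 <= r < p) L r * fibq (p.-1 - r).
  rewrite big_distrr -big_split; apply: eq_big_nat => r /andP[_ ltrp] /=.
  have [-> ->] : p.+1 - r = (p.-1 - r).+2 /\ p - r = (p.-1 - r).+1 by lia.
  by rewrite fibqSS mulnDr mulnCA.
lia.
Qed.

End FibonacciPolynomial.

Section LazyWalkBound.

Variables (n : nat) (a : 'I_n -> bool) (L : nat -> nat).

Hypothesis L0 : L 0 = 1.
Hypothesis L_rec : forall k, 0 < k ->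
  L k = ccount a * L k.-1 +
        \sum_(0 <= r < k - 2)
           L r * \sum_(0 <= q < k.+1) 'C(k - 3 - r - q, q) * F1 a * sumb a ^ q.

Local Notation lw := (nwalks (lazyrel a) a).
Local Notation Y := (fibq_conv (sumb a) L).

Lemma L_1 : L 1 = ccount a.
Proof. by rewrite L_rec //= L0 muln1 big_geq // addn0. Qed.

Lemma L_SS m : L m.+2 = ccount a * L m.+1 + F1 a * Y m.
Proof.
rewrite L_rec //= !subSS subn0 /fibq_conv big_distrr /=; congr (_ + _).
apply: eq_big_nat => r /andP[_ ltrm]; rewrite mulnCA; congr (L r * _).
have -> : m - 1 - r = m.-1 - r by lia.
rewrite -(@fibq_sum _ _ m.+3); last by lia.
by rewrite big_distrr; apply: eq_bigr => q _; rewrite /= mulnCA mulnA.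
Qed.

Definition type0_walks_bounded m := forall z, ~~ a z -> lw m z <= bval a z * Y m.

Lemma type0_walks_bounded0 : type0_walks_bounded 0.
Proof. by move=> z az /=; rewrite (negbTE az). Qed.

Lemma type0_walks_bounded1 : type0_walks_bounded 1.
Proof.
move=> z az; rewrite lw_type0 // /fibq_conv big_nat1 L0 /= (negbTE az) !muln1.
by rewrite /bval -sum1dep_card; apply: leq_sum => v /andP[_ ->].
Qed.

Lemma type0_walks_boundedSS p :
  type0_walks_bounded p -> type0_walks_bounded p.+1 -> LW a p.+1 <= L p.+1 ->
  type0_walks_bounded p.+2.
Proof.
move=> lwY0 lwY1 LWL z az; rewrite lw_type0 // fibq_convSS -addnA mulnDr.
rewrite leq_add ?lwY1 //.
apply: (@leq_trans (\sum_(v : 'I_n | (z < v) && a v) (LW a p.+1 + sumb a * Y p))).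
  by apply: leq_sum => v /andP[_ av]; apply: lw_type1_le.
by rewrite sum_nat_cond_const leq_mul2l leq_add2r LWL orbT.
Qed.

Lemma LW_1 : LW a 1 = L 1.
Proof.
by rewrite LW_nwalks L_1 /ccount -sum1dep_card; apply: eq_bigr => u /= ->.
Qed.

Lemma LW_le_succ m :
  type0_walks_bounded m -> LW a m.+1 <= L m.+1 -> LW a m.+2 <= L m.+2.
Proof.
move=> lwY LWL; rewrite LW_rec L_SS leq_add ?leq_mul //.
rewrite /F1 big_distrl /=; apply: leq_sum => w aw.
by rewrite expnS expn1 -mulnA leq_mul2l lwY ?orbT.
Qed.

Lemma lw_bounds m : type0_walks_bounded m /\ LW a m.+1 <= L m.+1.
Proof.
suff: (type0_walks_bounded m /\ LW a m.+1 <= L m.+1) /\ type0_walks_bounded m.+1.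
  by case.
elim: m => [|m [[lwY0 LWL] lwY1]].
  split; last exact: type0_walks_bounded1.
  by split; [exact: type0_walks_bounded0 | rewrite LW_1].
by split; [split; last exact: LW_le_succ | exact: type0_walks_boundedSS].
Qed.

End LazyWalkBound.

Theorem lemma5p2 (n : nat) (a : 'I_n -> bool) (L : nat -> nat) :
  4 <= n ->
  (forall i : 'I_n, val i = 0 -> a i) ->
  tconnected a ->
  n.-1 < gsize a < 'C(n, 2) ->
  L 0 = 1 ->
  (forall k, 0 < k ->
     L k = ccount a * L k.-1 +
           \sum_(0 <= r < k - 2)
              L r * \sum_(0 <= q < k.+1) 'C(k - 3 - r - q, q) * F1 a * sumb a ^ q) ->
  forall k, LW a k <= L k.
Proof.
move=> _ _ _ _ L0 L_rec [|m]; first by rewrite L0.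
exact: (lw_bounds L0 L_rec m).2.
Qed.
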